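(* Let $0<\eta<1$, $0<\alpha<\frac1\eta$, $0<\beta<\frac{1-\alpha\eta}{1-\eta}$ and $\theta\in(0,\tfrac12)$. Set $$k_1=1+\frac{\max\{\alpha,\beta\}}{(1-\alpha\eta)-\beta(1-\eta)},\qquad k_2=\theta\left[1+\frac{\beta+\min\{(\alpha-\beta)\theta,(\alpha-\beta)(1-\theta)\}}{(1-\alpha\eta)-\beta(1-\eta)}\right],\qquad \gamma=\frac{k_2}{k_1}.$$ If $y\in C([0,1])$ and $y\ge 0$, then the unique solution $u$ of the boundary value problem $$u''(t)+y(t)=0,\quad t\in[0,1],\qquad u(0)=\beta u(\eta),\quad u(1)=\alpha u(\eta)$$ satisfies $$\min_{\theta\le t\le 1-\theta} u(t)\ge \gamma\,\|u\|_1,\qquad\text{where } \|u\|_1=\sup\{|u(t)|: 0\le t\le 1\}.$$ *)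

From Stdlib Require Import Reals Lra.
From Coquelicot Require Import Coquelicot.
Open Scope R_scope.

Definition cont_on (a b : R) (f : R -> R) : Prop :=
  forall t, a <= t <= b ->
    filterlim f (within (fun x => a <= x <= b) (locally t)) (locally (f t)).

Definition sup_norm01 (u : R -> R) : Rbar :=
  Lub_Rbar (fun r => exists t, 0 <= t <= 1 /\ r = Rabs (u t)).

Definition min_on (a b : R) (u : R -> R) : Rbar :=
  Glb_Rbar (fun r => exists t, a <= t <= b /\ r = u t).

Definition den (eta alpha beta : R) : R := (1 - alpha * eta) - beta * (1 - eta).

Definition k1 (eta alpha beta : R) : R :=
  1 + Rmax alpha beta / den eta alpha beta.

Definition k2 (eta alpha beta theta : R) : R :=
  theta * (1 + (beta + Rmin ((alpha - beta) * theta) ((alpha - beta) * (1 - theta)))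
                 / den eta alpha beta).

Definition gamma (eta alpha beta theta : R) : R :=
  k2 eta alpha beta theta / k1 eta alpha beta.

(** The solution [u] is concave, since [u'' = -y <= 0]. The chord inequality
    at [eta] together with the boundary conditions gives
    [u(eta) * ((1 - alpha eta) - beta (1 - eta)) >= 0], so [u(eta) >= 0],
    hence [u(0), u(1) >= 0] and [u >= 0] on [[0,1]]. For a nonnegative
    concave [u] on [[0,1]], comparing [u(t)] with the chord to [u(s)] gives
    [u(t) >= min(t, 1 - t) u(s)], so [u >= theta ||u||_1] on
    [[theta, 1 - theta]]; finally [gamma <= theta]. *)
From Stdlib Require Import Reals.
From Coquelicot Require Import Coquelicot.
From Stdlib Require Import Lra Psatz.
Open Scope R_scope.

Lemma MVT_interior (f df : R -> R) (a b : R) : a < b ->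
  (forall x, a < x < b -> is_derive f x (df x)) ->
  (forall x, a <= x <= b -> continuity_pt f x) ->
  exists c, a < c < b /\ f b - f a = df c * (b - a).
Proof.
  intros ab f_deriv f_cont.
  assert (f_der : forall c, a < c < b -> derivable_pt f c).
  { intros c hc. exists (df c). now apply is_derive_Reals, f_deriv. }
  assert (id_der : forall c, a < c < b -> derivable_pt id c).
  { intros c _. apply derivable_pt_id. }
  destruct (MVT f id a b f_der id_der ab f_cont) as [c [hc eq_c]].
  { intros c _. apply derivable_continuous_pt, derivable_pt_id. }
  exists c; split; [exact hc|].
  rewrite (derive_pt_eq_0 f c (df c) (f_der c hc)) in eq_c
    by now apply is_derive_Reals, f_deriv.
  rewrite (derive_pt_eq_0 id c 1 (id_der c hc)) in eq_c
    by apply derivable_pt_lim_id.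
  unfold id in eq_c. lra.
Qed.

Lemma is_derive_nonpos_nonincreasing (g dg : R -> R) (a b : R) :
  (forall t, a < t < b -> is_derive g t (dg t)) ->
  (forall t, a < t < b -> dg t <= 0) ->
  forall p q, a < p -> p <= q -> q < b -> g q <= g p.
Proof.
  intros g_deriv dg_nonpos p q ap pq qb.
  destruct (Req_dec p q) as [<-|lt_pq]; [lra|].
  destruct (MVT_interior g dg p q) as [c [hc eq_c]]; [lra| | |].
  - intros x hx. apply g_deriv. lra.
  - intros x hx. apply derivable_continuous_pt. exists (dg x).
    apply is_derive_Reals, g_deriv. lra.
  - assert (dg c <= 0) by (apply dg_nonpos; lra). nra.
Qed.

(** [f (clamp a b t)] extends [f] from [[a, b]] to [R]; its continuity at the
    endpoints is two-sided, as the mean value theorem of the library requires. *)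
Definition clamp (a b t : R) : R := Rmax a (Rmin b t).

Lemma clamp_id (a b t : R) : a <= t <= b -> clamp a b t = t.
Proof. intros. unfold clamp, Rmax, Rmin. repeat destruct Rle_dec; lra. Qed.

Lemma clamp_in (a b t : R) : a <= b -> a <= clamp a b t <= b.
Proof. intros. unfold clamp, Rmax, Rmin. repeat destruct Rle_dec; lra. Qed.

Lemma clamp_dist (a b x t : R) :
  a <= x <= b -> Rabs (clamp a b t - x) <= Rabs (t - x).
Proof.
  intros. unfold clamp, Rmax, Rmin, Rabs.
  repeat destruct Rle_dec; repeat destruct Rcase_abs; lra.
Qed.

Lemma continuity_pt_clamp_comp (a b : R) (f : R -> R) x :
  cont_on a b f -> a <= x <= b -> continuity_pt (fun t => f (clamp a b t)) x.
Proof.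
  intros f_cont hx. apply continuity_pt_filterlim.
  rewrite (clamp_id a b x hx).
  eapply filterlim_comp; [|exact (f_cont x hx)].
  intros P [eps HP]. exists eps. intros t ht.
  apply HP; [|apply clamp_in; lra].
  revert ht. unfold ball; simpl. unfold AbsRing_ball, abs, minus, plus, opp; simpl.
  pose proof (clamp_dist a b x t hx). unfold Rminus in *. lra.
Qed.

Lemma is_derive_clamp_comp (a b : R) (f : R -> R) x l :
  a < x < b -> is_derive f x l -> is_derive (fun t => f (clamp a b t)) x l.
Proof.
  intros hx. apply is_derive_ext_loc.
  assert (gt_a : locally x (fun t => a < t)) by (apply open_gt; lra).
  assert (lt_b : locally x (fun t => t < b)) by (apply open_lt; lra).
  generalize (filter_and _ _ gt_a lt_b). apply filter_imp.
  intros t ht. simpl in ht. rewrite clamp_id; lra.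
Qed.

Definition concave_on (a b : R) (f : R -> R) : Prop :=
  forall x0 x x1, a <= x0 < x -> x < x1 <= b ->
    (x1 - x) * f x0 + (x - x0) * f x1 <= (x1 - x0) * f x.

Lemma concave_on_of_derive_nonincreasing (a b : R) (f f' : R -> R) :
  cont_on a b f ->
  (forall t, a < t < b -> is_derive f t (f' t)) ->
  (forall p q, a < p -> p <= q -> q < b -> f' q <= f' p) ->
  concave_on a b f.
Proof.
  intros f_cont f_deriv f'_noninc x0 x x1 hx0 hx1.
  assert (slope : forall l r, a <= l < r -> r <= b ->
            exists c, l < c < r /\ f r - f l = f' c * (r - l)).
  { intros l r hl hr.
    destruct (MVT_interior (fun t => f (clamp a b t)) f' l r)
      as [c [hc eq_c]]; [lra| | |].
    - intros t ht. apply is_derive_clamp_comp; [lra|]. apply f_deriv. lra.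
    - intros t ht. apply continuity_pt_clamp_comp; [exact f_cont|lra].
    - exists c. now rewrite !clamp_id in eq_c by lra. }
  destruct (slope x0 x) as [c0 [hc0 slope0]]; [lra|lra|].
  destruct (slope x x1) as [c1 [hc1 slope1]]; [lra|lra|].
  assert (f' c1 <= f' c0) by (apply f'_noninc; lra).
  assert (0 <= (x1 - x) * (x - x0)) by nra.
  nra.
Qed.

Lemma concave_on_nonneg (a b : R) (g : R -> R) :
  concave_on a b g -> 0 <= g a -> 0 <= g b ->
  forall t, a <= t <= b -> 0 <= g t.
Proof.
  intros g_conc ga gb t ht.
  destruct (Req_dec t a) as [->|ta]; [exact ga|].
  destruct (Req_dec t b) as [->|tb]; [exact gb|].
  pose proof (g_conc a t b ltac:(lra) ltac:(lra)). nra.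
Qed.

Lemma concave_on_nonlocal_bc_nonneg (eta alpha beta : R) (g : R -> R) :
  concave_on 0 1 g -> 0 < eta < 1 -> 0 <= alpha -> 0 <= beta ->
  0 < den eta alpha beta ->
  g 0 = beta * g eta -> g 1 = alpha * g eta ->
  forall t, 0 <= t <= 1 -> 0 <= g t.
Proof.
  unfold den. intros g_conc heta ha hb hden g0 g1.
  assert (g_eta : 0 <= g eta).
  { pose proof (g_conc 0 eta 1 ltac:(lra) ltac:(lra)) as chord.
    rewrite g0, g1 in chord. nra. }
  apply concave_on_nonneg; [exact g_conc | rewrite g0 | rewrite g1]; nra.
Qed.

Lemma concave_on_ge_mul (g : R -> R) (k : R) :
  concave_on 0 1 g -> (forall t, 0 <= t <= 1 -> 0 <= g t) -> 0 < k ->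
  forall s t, 0 <= s <= 1 -> k <= t <= 1 - k -> k * g s <= g t.
Proof.
  intros g_conc g_ge0 hk s t hs ht.
  pose proof (g_ge0 s hs). pose proof (g_ge0 t ltac:(lra)).
  pose proof (g_ge0 0 ltac:(lra)). pose proof (g_ge0 1 ltac:(lra)).
  destruct (Rtotal_order s t) as [st|[<-|ts]].
  - pose proof (g_conc s t 1 ltac:(lra) ltac:(lra)). nra.
  - nra.
  - pose proof (g_conc 0 t s ltac:(lra) ltac:(lra)). nra.
Qed.

Lemma den_pos (eta alpha beta : R) :
  0 < eta < 1 -> beta < (1 - alpha * eta) / (1 - eta) ->
  0 < den eta alpha beta.
Proof.
  unfold den. intros heta hb.
  apply (Rmult_lt_compat_r (1 - eta)) in hb; [|lra].
  replace ((1 - alpha * eta) / (1 - eta) * (1 - eta)) with (1 - alpha * eta) in hb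
    by (field; lra).
  lra.
Qed.

Lemma gamma_le_theta (eta alpha beta theta : R) :
  0 < den eta alpha beta -> 0 <= alpha -> 0 <= beta -> 0 <= theta <= 1 ->
  gamma eta alpha beta theta <= theta.
Proof.
  unfold gamma, k1, k2. intros hden ha hb ht.
  set (d := den eta alpha beta) in *.
  set (M := Rmax alpha beta).
  set (m := Rmin ((alpha - beta) * theta) ((alpha - beta) * (1 - theta))).
  assert (hM : beta + m <= M /\ 0 <= M).
  { unfold M, m, Rmax, Rmin. repeat destruct Rle_dec; nra. }
  assert (hd : 0 < / d) by (apply Rinv_0_lt_compat; exact hden).
  assert (hAB : (beta + m) / d <= M / d) by (apply Rmult_le_compat_r; lra).
  assert (hB : 0 <= M / d) by (apply Rmult_le_pos; lra).
  set (B := M / d) in *.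
  apply (Rle_trans _ (theta * (1 + B) / (1 + B))); [|right; field; lra].
  apply Rmult_le_compat_r; [left; apply Rinv_0_lt_compat; lra | nra].
Qed.

Lemma sup_norm01_ge (u : R -> R) s :
  0 <= s <= 1 -> Rbar_le (Rabs (u s)) (sup_norm01 u).
Proof. intros hs. apply (proj1 (Lub_Rbar_correct _)). now exists s. Qed.

Lemma sup_norm01_le (u : R -> R) (M : Rbar) :
  (forall s, 0 <= s <= 1 -> Rbar_le (Rabs (u s)) M) ->
  Rbar_le (sup_norm01 u) M.
Proof.
  intros hM. apply (proj2 (Lub_Rbar_correct _)).
  intros _ [s [hs ->]]. now apply hM.
Qed.

Lemma min_on_ge (a b : R) (u : R -> R) (m : Rbar) :
  (forall t, a <= t <= b -> Rbar_le m (u t)) -> Rbar_le m (min_on a b u).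
Proof.
  intros hm. apply (proj2 (Glb_Rbar_correct _)).
  intros _ [t [ht ->]]. now apply hm.
Qed.

Lemma mult_sup_norm01_le_min_on (c k a b : R) (u : R -> R) :
  0 < k -> c <= k -> a <= b ->
  (forall s t, 0 <= s <= 1 -> a <= t <= b -> k * Rabs (u s) <= u t) ->
  Rbar_le (Rbar_mult c (sup_norm01 u)) (min_on a b u).
Proof.
  intros hk ck ab hu.
  assert (sup_le : forall t, a <= t <= b -> Rbar_le (sup_norm01 u) (u t / k)).
  { intros t ht. apply sup_norm01_le. intros s hs. simpl.
    apply (Rmult_le_reg_l k); [exact hk|].
    replace (k * (u t / k)) with (u t) by (field; lra). now apply hu. }
  pose proof (sup_norm01_ge u 0 ltac:(lra)) as ge_u0.
  pose proof (sup_le a ltac:(lra)) as le_ua.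
  destruct (sup_norm01 u) as [S| |]; simpl in ge_u0, le_ua; try contradiction.
  pose proof (Rabs_pos (u 0)).
  apply min_on_ge. intros t ht. simpl.
  specialize (sup_le t ht). simpl in sup_le.
  apply (Rmult_le_compat_l k) in sup_le; [|lra].
  replace (k * (u t / k)) with (u t) in sup_le by (field; lra).
  nra.
Qed.

Theorem lemma2p5 (eta alpha beta theta : R) (y u u' : R -> R) :
  0 < eta < 1 ->
  0 < alpha < 1 / eta ->
  0 < beta < (1 - alpha * eta) / (1 - eta) ->
  0 < theta < 1 / 2 ->
  cont_on 0 1 y ->
  (forall t, 0 <= t <= 1 -> 0 <= y t) ->
  (* u is a solution of u'' + y = 0 on [0,1] with the boundary conditions *)
  cont_on 0 1 u ->
  (forall t, 0 < t < 1 -> is_derive u t (u' t)) ->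
  (forall t, 0 < t < 1 -> is_derive u' t (- y t)) ->
  u 0 = beta * u eta ->
  u 1 = alpha * u eta ->
  Rbar_le (Rbar_mult (gamma eta alpha beta theta) (sup_norm01 u))
          (min_on theta (1 - theta) u).
Proof.
  intros heta ha hb ht _ y_ge0 u_cont u_deriv u'_deriv u0 u1.
  pose proof (den_pos eta alpha beta heta (proj2 hb)) as hden.
  assert (u_conc : concave_on 0 1 u).
  { apply (concave_on_of_derive_nonincreasing _ _ _ u' u_cont u_deriv).
    apply (is_derive_nonpos_nonincreasing _ (fun t => - y t) _ _ u'_deriv).
    intros t htt. pose proof (y_ge0 t ltac:(lra)). lra. }
  pose proof (concave_on_nonlocal_bc_nonneg eta alpha beta u u_conc heta
                ltac:(lra) ltac:(lra) hden u0 u1) as u_ge0.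
  apply (mult_sup_norm01_le_min_on _ theta); [lra| |lra|].
  - apply gamma_le_theta; lra.
  - intros s t hs htt. rewrite Rabs_pos_eq by (apply u_ge0; exact hs).
    apply concave_on_ge_mul; [exact u_conc | exact u_ge0 | lra | exact hs | lra].
Qed.
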